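(* For every integer $n\ge1$, $$\frac{\sqrt{12}\,e^{\mu(n)}}{24n-1}\left(1-\frac{1}{\mu(n)}\right)=\frac{e^{\pi\sqrt{2n/3}}}{4n\sqrt3}\sum_{t=0}^\infty \frac{g(t)}{n^{t/2}},$$ where $\mu(n)=\frac{\pi}{6}\sqrt{24n-1}$ and $$g(t)=\frac{1}{(-4\sqrt6)^t}\sum_{k=0}^{\lfloor (t+1)/2\rfloor}\binom{t+1}{k}\frac{t+1-k}{(t+1-2k)!}\left(\frac{\pi}{6}\right)^{t-2k}.$$ *)

From Stdlib Require Import Reals ZArith Arith.
From Coquelicot Require Import Coquelicot.
Open Scope R_scope.

Definition mu (n : nat) : R := PI / 6 * sqrt (24 * INR n - 1).

(* g(t) = (-4 sqrt 6)^(-t) * sum_{k=0}^{floor((t+1)/2)} C(t+1,k) (t+1-k)/(t+1-2k)! (pi/6)^(t-2k).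
   The exponent t-2k may equal -1 (t odd, k=(t+1)/2), hence an integer power. *)
Definition g (t : nat) : R :=
  / ((- (4 * sqrt 6)) ^ t) *
  sum_f_R0 (fun k : nat =>
      Binomial.C (t + 1) k * INR (t + 1 - k) / INR (fact (t + 1 - 2 * k))
      * powerRZ (PI / 6) (Z.of_nat t - 2 * Z.of_nat k)%Z)
    ((t + 1) / 2)%nat.

Definition g_term (n t : nat) : R := g t / (sqrt (INR n)) ^ t.

(* Put [s = sqrt (24 n)], [v = sqrt (24 n - 1)], [c = pi / 6], [z = 1 / (2 s)] and
   [x = z^2].  The double series
     sum_(j, k) (-c z)^j / j! * (j + k) * binom (j + 2 k, k) * x^k
   summed along the lines [j + 2 k = t + 1] gives [- c z (-z)^t] times the sum in [g t].
   Summed over [k] first, it involves [G_j = sum_k (j + k) binom (j + 2 k, k) x^k], which by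
   Pascal's rule satisfies [G_(j+1) = G_j + F_j + x G_(j+2)] with
   [F_j = sum_k binom (j + 2 k, k) x^k], [F_(j+1) = F_j + x F_(j+2)].  Solutions of these
   recurrences growing at most like [4^j] are governed by the small root [C = 2 s (s - v)] of
   [x C^2 - C + 1], so [G_j = (a j + b) C^j] and the sum over [j] is an exponential; as
   [c z C = c (s - v)], it equals [e^(c (v - s)) s^2 (c v - 1) / (c v^3)]. *)

From Stdlib Require Import Reals ZArith Arith Lra Lia.
From Coquelicot Require Import Coquelicot.
Open Scope R_scope.

Lemma C_nonneg n k : 0 <= Binomial.C n k.
Proof.
  unfold Binomial.C. apply Rle_mult_inv_pos; [apply pos_INR|].
  apply Rmult_lt_0_compat; apply INR_fact_lt_0.
Qed.

Lemma sum_f_R0_ge_term (f : nat -> R) N i :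
  (forall i, 0 <= f i) -> (i <= N)%nat -> f i <= sum_f_R0 f N.
Proof.
  intros Hf Hi. induction N as [|N IH].
  - replace i with 0%nat by lia. simpl; lra.
  - simpl. destruct (Nat.eq_dec i (S N)) as [->|Hne].
    + pose proof (cond_pos_sum f N Hf). lra.
    + specialize (IH ltac:(lia)). specialize (Hf (S N)). lra.
Qed.

Lemma C_le_pow2 n k : (k <= n)%nat -> Binomial.C n k <= 2 ^ n.
Proof.
  intros Hk. replace 2 with (1 + 1) by lra. rewrite binomial.
  rewrite (sum_eq _ (Binomial.C n)) by (intros; rewrite !pow1; ring).
  apply sum_f_R0_ge_term; [apply C_nonneg | exact Hk].
Qed.

Lemma INR_le_pow2 m : INR m <= 2 ^ m.
Proof.
  induction m as [|m IH]; [simpl; lra|]. rewrite S_INR. simpl.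
  assert (1 <= 2 ^ m) by (apply pow_R1_Rle; lra). lra.
Qed.

Lemma is_series_geom_error (a : nat -> R) l K q : 0 <= q < 1 ->
  (forall M, Rabs (sum_f_R0 a M - l) <= K * q ^ M) -> is_series a l.
Proof.
  intros Hq Ha. rewrite is_series_Reals. intros eps Heps.
  assert (HK : 0 <= K).
  { specialize (Ha 0%nat). pose proof (Rabs_pos (sum_f_R0 a 0 - l)). simpl in *. lra. }
  destruct (pow_lt_1_zero q ltac:(rewrite Rabs_pos_eq; lra) (eps / (K + 1))) as [N HN].
  { apply Rdiv_lt_0_compat; lra. }
  exists N. intros M HM. specialize (HN M HM).
  rewrite Rabs_pos_eq in HN by (apply pow_le; lra).
  apply (Rmult_lt_compat_r (K + 1)) in HN; [|lra].
  unfold Rdiv in HN. rewrite Rmult_assoc, Rinv_l, Rmult_1_r in HN by lra.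
  pose proof (pow_le q M ltac:(lra)).
  eapply Rle_lt_trans; [apply Ha|]. nra.
Qed.

Lemma eq0_of_le_geom r K q : 0 <= q < 1 -> (forall N, Rabs r <= K * q ^ N) -> r = 0.
Proof.
  intros Hq Hr.
  assert (Hsum : forall l K', (forall M, Rabs l <= K' * q ^ M) -> is_series (fun _ => 0) l).
  { intros l K' Hl. apply (is_series_geom_error _ _ K' q Hq). intros M.
    rewrite sum_cte, Rmult_0_l, Rminus_0_l, Rabs_Ropp. apply Hl. }
  rewrite <- (is_series_unique _ _ (Hsum r K Hr)).
  apply is_series_unique, (Hsum 0 0). intros M. rewrite Rabs_R0. lra.
Qed.

Section GeometricDomination.
Variables (A q : R) (a : nat -> R).
Hypothesis Hq : 0 <= q < 1.
Hypothesis Ha : forall k, Rabs (a k) <= A * q ^ k.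

Lemma is_series_geom_scal : is_series (fun k => A * q ^ k) (A / (1 - q)).
Proof.
  apply (is_series_ext (fun k => q ^ k * A)); [intros; simpl; ring|].
  replace (A / (1 - q)) with (/ (1 - q) * A) by (field; lra).
  apply is_series_scal_r, is_series_geom. rewrite Rabs_pos_eq; lra.
Qed.

Lemma ex_series_Rabs_geom_dom : ex_series (fun k => Rabs (a k)).
Proof.
  apply (@ex_series_le R_AbsRing R_CompleteNormedModule _ (fun k => A * q ^ k)).
  - intros k. change (Rabs (Rabs (a k)) <= A * q ^ k). rewrite Rabs_Rabsolu. apply Ha.
  - eexists. apply is_series_geom_scal.
Qed.

Lemma ex_series_geom_dom : ex_series a.
Proof. apply ex_series_Rabs, ex_series_Rabs_geom_dom. Qed.

Lemma Series_geom_dom : Rabs (Series a) <= A / (1 - q).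
Proof.
  eapply Rle_trans; [apply Series_Rabs, ex_series_Rabs_geom_dom|].
  rewrite <- (is_series_unique _ _ is_series_geom_scal).
  apply Series_le; [intros k; split; [apply Rabs_pos | apply Ha]|].
  eexists. apply is_series_geom_scal.
Qed.

End GeometricDomination.

Lemma Series_tail_geom_dom (a : nat -> R) A q L : 0 <= q < 1 ->
  (forall k, Rabs (a k) <= A * q ^ k) ->
  Rabs (Series a - sum_f_R0 a L) <= A * q ^ S L / (1 - q).
Proof.
  intros Hq Ha.
  rewrite (Series_incr_n a (S L)) by (try lia; exact (ex_series_geom_dom A q a Hq Ha)).
  simpl Nat.pred. rewrite Rplus_comm. unfold Rminus. rewrite Rplus_assoc, Rplus_opp_r, Rplus_0_r.
  apply Series_geom_dom; [exact Hq|]. intros k.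
  eapply Rle_trans; [apply Ha|]. rewrite pow_add. lra.
Qed.

(* [even_spread h] puts [h k] at index [2 k] and zeros at odd indices, so that sums over
   [j + 2 k = m] become antidiagonal sums over [j + i = m]. *)
Definition even_spread (h : nat -> R) (i : nat) : R :=
  if Nat.even i then h (Nat.div2 i) else 0.

Lemma even_spread_double h k : even_spread h (2 * k) = h k.
Proof.
  unfold even_spread. rewrite Nat.even_mul, Nat.div2_double. reflexivity.
Qed.

Lemma even_spread_odd h k : even_spread h (S (2 * k)) = 0.
Proof. unfold even_spread. rewrite Nat.even_succ, Nat.odd_mul. reflexivity. Qed.

Lemma sum_even_spread h k :
  sum_f_R0 (even_spread h) (2 * k) = sum_f_R0 h k /\
  sum_f_R0 (even_spread h) (S (2 * k)) = sum_f_R0 h k.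
Proof.
  induction k as [|k [IH _]].
  - unfold even_spread; simpl. lra.
  - replace (2 * S k)%nat with (S (S (2 * k))) by lia.
    assert (Heven : even_spread h (S (S (2 * k))) = h (S k)).
    { replace (S (S (2 * k))) with (2 * S k)%nat by lia. apply even_spread_double. }
    assert (Hodd : even_spread h (S (S (S (2 * k)))) = 0).
    { replace (S (S (2 * k))) with (2 * S k)%nat by lia. apply even_spread_odd. }
    cbn [sum_f_R0]. rewrite IH, Heven, Hodd, even_spread_odd. split; lra.
Qed.

Lemma is_series_even_spread h l : is_series h l -> is_series (even_spread h) l.
Proof.
  rewrite !is_series_Reals. intros H eps Heps.
  destruct (H eps Heps) as [N HN]. exists (2 * N)%nat. intros n Hn.
  destruct (Nat.Even_or_Odd n) as [[k ->]|[k ->]].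
  - rewrite (proj1 (sum_even_spread h k)). apply HN. lia.
  - rewrite Nat.add_1_r, (proj2 (sum_even_spread h k)). apply HN. lia.
Qed.

Lemma sum_antidiag_even_spread (f : nat -> nat -> R) m :
  sum_f_R0 (fun k => f (m - 2 * k)%nat k) (Nat.div2 m) =
  sum_f_R0 (fun j => even_spread (f j) (m - j)) m.
Proof.
  revert f. induction m as [m IH] using (well_founded_induction lt_wf). intros f.
  destruct m as [|[|m]].
  - unfold even_spread; simpl. lra.
  - unfold even_spread; simpl. lra.
  - change (Nat.div2 (S (S m))) with (S (Nat.div2 m)).
    pose proof (IH m ltac:(lia) (fun j k => f j (S k))) as Hshift. cbv beta in Hshift.
    rewrite decomp_sum by apply Nat.lt_0_succ. simpl Nat.pred.
    rewrite (sum_eq (fun i => f (S (S m) - 2 * S i)%nat (S i)) (fun k => f (m - 2 * k)%nat (S k)))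
      by (intros i _; f_equal; lia).
    rewrite Hshift. cbn [sum_f_R0].
    rewrite (sum_eq (fun j => even_spread (f j) (S (S m) - j))
                    (fun j => even_spread (fun k => f j (S k)) (m - j)))
      by (intros j Hj; replace (S (S m) - j)%nat with (S (S (m - j))) by lia;
          unfold even_spread; rewrite Nat.even_succ_succ; reflexivity).
    replace (S (S m) - S m)%nat with 1%nat by lia. rewrite Nat.sub_diag.
    change (even_spread (f (S m)) 1) with 0.
    change (even_spread (f (S (S m))) 0) with (f (S (S m)) 0%nat).
    rewrite Nat.mul_0_r, Nat.sub_0_r. lra.
Qed.

Lemma sum_antidiag_rows (E : nat -> nat -> R) M :
  sum_f_R0 (fun m => sum_f_R0 (fun j => E j (m - j)%nat) m) M =
  sum_f_R0 (fun j => sum_f_R0 (E j) (M - j)) M.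
Proof.
  induction M as [|M IH]; [reflexivity|].
  cbn [sum_f_R0]. rewrite IH. replace (S M - S M)%nat with 0%nat by lia.
  rewrite (sum_eq (fun j => sum_f_R0 (E j) (S M - j))
                  (fun j => sum_f_R0 (E j) (M - j) + E j (S M - j)%nat))
    by (intros j Hj; replace (S M - j)%nat with (S (M - j)) by lia; reflexivity).
  rewrite plus_sum. simpl. lra.
Qed.

Lemma sum_geom_le q M : 0 <= q < 1 -> sum_f_R0 (fun j => q ^ j) M <= / (1 - q).
Proof.
  intros Hq. rewrite tech3 by lra. pose proof (pow_le q (S M) ltac:(lra)).
  unfold Rdiv. rewrite <- (Rmult_1_l (/ (1 - q))) at 2.
  apply Rmult_le_compat_r; [apply Rlt_le, Rinv_0_lt_compat|]; lra.
Qed.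

Section Antidiagonal.
Variables (E : nat -> nat -> R) (p q K : R).
Hypothesis Hp : 0 <= p.
Hypothesis Hq : 0 < q < 1.
Hypothesis Hpq : p <= q * q.
Hypothesis HE : forall j i, Rabs (E j i) <= K * p ^ j * q ^ i.

Let antidiag (m : nat) : R := sum_f_R0 (fun j => E j (m - j)%nat) m.

Lemma antidiag_const_nonneg : 0 <= K.
Proof. pose proof (Rabs_pos (E 0%nat 0%nat)). pose proof (HE 0 0). simpl in *. lra. Qed.

Lemma antidiag_row_bound j : Rabs (Series (E j)) <= K / (1 - q) * p ^ j.
Proof.
  replace (K / (1 - q) * p ^ j) with (K * p ^ j / (1 - q)) by (field; lra).
  apply Series_geom_dom; [lra | apply HE].
Qed.

Lemma antidiag_partial_error M :
  Rabs (sum_f_R0 (fun j => Series (E j)) M - sum_f_R0 antidiag M)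
  <= K / ((1 - q) * (1 - q)) * q ^ S M.
Proof.
  pose proof antidiag_const_nonneg as HK.
  assert (Hkq : 0 <= K / (1 - q) * q ^ S M)
    by (apply Rmult_le_pos; [apply Rdiv_le_0_compat|apply pow_le]; lra).
  unfold antidiag. rewrite sum_antidiag_rows, <- minus_sum.
  eapply Rle_trans; [apply Rsum_abs|].
  eapply Rle_trans; [apply (sum_Rle _ (fun j => q ^ j * (K / (1 - q) * q ^ S M)))|].
  - intros j Hj. eapply Rle_trans; [apply (Series_tail_geom_dom _ (K * p ^ j) q); [lra|apply HE]|].
    assert (Hpj : p ^ j <= q ^ j * q ^ j) by (rewrite <- Rpow_mult_distr; apply pow_incr; lra).
    assert (Hsplit : q ^ S M = q ^ j * q ^ S (M - j)) by (rewrite <- pow_add; f_equal; lia).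
    pose proof (pow_le q (S (M - j)) ltac:(lra)).
    rewrite Hsplit. unfold Rdiv.
    assert (0 <= K * / (1 - q)) by (apply Rmult_le_pos; [|apply Rlt_le, Rinv_0_lt_compat]; lra).
    replace (K * p ^ j * q ^ S (M - j) * / (1 - q))
      with (K * / (1 - q) * q ^ S (M - j) * p ^ j) by ring.
    replace (q ^ j * (K * / (1 - q) * (q ^ j * q ^ S (M - j))))
      with (K * / (1 - q) * q ^ S (M - j) * (q ^ j * q ^ j)) by ring.
    apply Rmult_le_compat_l; [apply Rmult_le_pos|]; assumption.
  - rewrite <- scal_sum.
    replace (K / ((1 - q) * (1 - q)) * q ^ S M)
      with (K / (1 - q) * q ^ S M * / (1 - q)) by (field; lra).
    apply Rmult_le_compat_l; [exact Hkq|]. apply sum_geom_le. lra.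
Qed.

Lemma is_series_antidiag : is_series antidiag (Series (fun j => Series (E j))).
Proof.
  set (B := fun j => Series (E j)).
  assert (HB : forall j, Rabs (B j) <= K / (1 - q) * p ^ j) by apply antidiag_row_bound.
  apply (is_series_geom_error _ _ (K / (1 - q) / (1 - p) + K / ((1 - q) * (1 - q))) q); [lra|].
  intros M.
  pose proof (Series_tail_geom_dom B (K / (1 - q)) p M ltac:(nra) HB) as Htail.
  pose proof (antidiag_partial_error M) as Hpart. fold B in Hpart.
  replace (sum_f_R0 antidiag M - Series B)
    with (- (Series B - sum_f_R0 B M) - (sum_f_R0 B M - sum_f_R0 antidiag M)) by ring.
  eapply Rle_trans; [apply Rabs_triang|]. rewrite !Rabs_Ropp.
  assert (HpM : p ^ S M <= q ^ S M) by (apply pow_incr; nra).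
  assert (HqM : q ^ S M <= q ^ M) by (simpl; pose proof (pow_le q M); nra).
  pose proof antidiag_const_nonneg as HK.
  assert (H1 : 0 <= K / (1 - q) / (1 - p)) by (repeat apply Rdiv_le_0_compat; nra).
  assert (H2 : 0 <= K / ((1 - q) * (1 - q))) by (apply Rdiv_le_0_compat; nra).
  replace (K / (1 - q) * p ^ S M / (1 - p)) with (K / (1 - q) / (1 - p) * p ^ S M) in Htail
    by (field; nra).
  nra.
Qed.

End Antidiagonal.

(* The characteristic roots of [Y(j+1) = Y(j) + x Y(j+2)] are the two roots of [x C^2 - C + 1];
   a solution growing at most like [4^j] only sees the smaller one. *)
Lemma recurrence_small_root (Y : nat -> R) x C K :
  0 <= x -> 0 < C -> x * C * C - C + 1 = 0 -> 4 * x * C < 1 ->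
  (forall j, Y (S j) = Y j + x * Y (S (S j))) -> (forall j, Rabs (Y j) <= K * 4 ^ j) ->
  forall j, Y j = C ^ j * Y 0%nat.
Proof.
  intros Hx HC Hroot Hsmall Hrec Hgrowth.
  set (D := fun j => Y (S j) - C * Y j).
  assert (HD : forall j, D j = x * C * D (S j)).
  { intros j. unfold D. pose proof (Hrec j).
    replace (x * C * (Y (S (S j)) - C * Y (S j)))
      with (C * (x * Y (S (S j))) - x * C * C * Y (S j)) by ring.
    replace (x * C * C) with (C - 1) by lra.
    replace (x * Y (S (S j))) with (Y (S j) - Y j) by lra. ring. }
  assert (HDN : forall j N, D j = (x * C) ^ N * D (j + N)%nat).
  { intros j N. induction N as [|N IH]; [rewrite Nat.add_0_r; ring|].
    rewrite IH, HD, Nat.add_succ_r. cbn [pow]. ring. }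
  assert (HDz : forall j, D j = 0).
  { intros j. apply (eq0_of_le_geom _ (K * (4 + C) * 4 ^ j) (4 * x * C)); [nra|].
    intros N. rewrite (HDN j N), Rabs_mult, Rabs_pos_eq by (apply pow_le; nra).
    assert (HDb : Rabs (D (j + N)%nat) <= K * (4 + C) * 4 ^ (j + N)).
    { unfold D. eapply Rle_trans; [apply Rabs_triang|].
      rewrite Rabs_Ropp, Rabs_mult, (Rabs_pos_eq C) by lra.
      pose proof (Hgrowth (S (j + N))). pose proof (Hgrowth (j + N)%nat). simpl pow in *. nra. }
    replace ((4 * x * C) ^ N) with ((x * C) ^ N * 4 ^ N)
      by (rewrite <- Rpow_mult_distr; f_equal; ring).
    rewrite pow_add in HDb. pose proof (pow_le (x * C) N ltac:(nra)). nra. }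
  intros j. induction j as [|j IH]; [simpl; ring|].
  specialize (HDz j). unfold D in HDz. cbn [pow]. rewrite Rmult_assoc, <- IH. lra.
Qed.

Definition Fterm (x : R) (j k : nat) : R := Binomial.C (j + 2 * k) k * x ^ k.
Definition Gterm (x : R) (j k : nat) : R := INR (j + k) * Fterm x j k.
Definition Fsum (x : R) (j : nat) : R := Series (Fterm x j).
Definition Gsum (x : R) (j : nat) : R := Series (Gterm x j).

Lemma Fterm_bound x j k : 0 <= x -> 0 <= Fterm x j k <= 2 ^ j * (4 * x) ^ k.
Proof.
  intros Hx. unfold Fterm.
  pose proof (C_nonneg (j + 2 * k) k). pose proof (C_le_pow2 (j + 2 * k) k ltac:(lia)).
  pose proof (pow_le x k Hx).
  replace (2 ^ j * (4 * x) ^ k) with (2 ^ (j + 2 * k) * x ^ k)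
    by (rewrite pow_add, pow_mult, Rpow_mult_distr; replace (2 ^ 2) with 4 by ring; ring).
  split; [apply Rmult_le_pos|apply Rmult_le_compat_r]; assumption.
Qed.

Lemma Gterm_bound x j k : 0 <= x -> 0 <= Gterm x j k <= 4 ^ j * (8 * x) ^ k.
Proof.
  intros Hx. unfold Gterm. destruct (Fterm_bound x j k Hx) as [HF0 HF].
  pose proof (pos_INR (j + k)). pose proof (INR_le_pow2 (j + k)).
  replace (4 ^ j * (8 * x) ^ k) with (2 ^ (j + k) * (2 ^ j * (4 * x) ^ k))
    by (rewrite pow_add, !Rpow_mult_distr; replace 4 with (2 * 2) by ring;
        replace 8 with (2 * (2 * 2)) by ring; rewrite !Rpow_mult_distr; ring).
  split; [apply Rmult_le_pos|apply Rmult_le_compat]; assumption.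
Qed.

Lemma Fterm_0 x j : Fterm x j 0 = 1.
Proof. unfold Fterm. rewrite Nat.mul_0_r, Nat.add_0_r, C_n_0. simpl; ring. Qed.

Lemma Gterm_0 x j : Gterm x j 0 = INR j.
Proof. unfold Gterm. rewrite Fterm_0, Nat.add_0_r. ring. Qed.

Lemma Fterm_pascal x j k : Fterm x (S j) (S k) = Fterm x j (S k) + x * Fterm x (S (S j)) k.
Proof.
  unfold Fterm. replace (S j + 2 * S k)%nat with (S (j + 2 * S k)) by lia.
  rewrite <- pascal by lia. replace (j + 2 * S k)%nat with (S (S j) + 2 * k)%nat at 1 by lia.
  simpl pow. ring.
Qed.

Lemma Fterm_0_pascal x k : Fterm x 0 (S k) = 2 * x * Fterm x 1 k.
Proof.
  unfold Fterm. replace (0 + 2 * S k)%nat with (S (1 + 2 * k)) by lia.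
  rewrite <- pascal by lia.
  rewrite (pascal_step1 (1 + 2 * k) (S k)) by lia.
  replace (1 + 2 * k - S k)%nat with k by lia. simpl pow. ring.
Qed.

Section BinomialSeries.
Variable x : R.
Hypothesis Hx : 0 <= x <= 1 / 16.

Lemma dominated_by_pow_8x (a : nat -> R) j :
  (forall k, 0 <= a k <= 4 ^ j * (8 * x) ^ k) -> ex_series a /\ Rabs (Series a) <= 2 * 4 ^ j.
Proof.
  intros Ha.
  assert (Hdom : forall k, Rabs (a k) <= 4 ^ j * (8 * x) ^ k)
    by (intros k; rewrite Rabs_pos_eq; apply Ha).
  split; [exact (ex_series_geom_dom _ (8 * x) _ ltac:(lra) Hdom)|].
  eapply Rle_trans; [exact (Series_geom_dom _ (8 * x) _ ltac:(lra) Hdom)|].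
  pose proof (pow_le 4 j ltac:(lra)).
  apply Rle_div_l; [lra|]. nra.
Qed.

Lemma Fterm_dominated j k : 0 <= Fterm x j k <= 4 ^ j * (8 * x) ^ k.
Proof.
  destruct (Fterm_bound x j k ltac:(lra)) as [H0 H1]. split; [exact H0|].
  eapply Rle_trans; [exact H1|].
  apply Rmult_le_compat; try (apply pow_le; lra); apply pow_incr; lra.
Qed.

Lemma ex_series_Fterm j : ex_series (Fterm x j).
Proof. apply (dominated_by_pow_8x _ j), Fterm_dominated. Qed.

Lemma ex_series_Gterm j : ex_series (Gterm x j).
Proof. apply (dominated_by_pow_8x _ j). intros k. apply Gterm_bound. lra. Qed.

Lemma Fsum_bound j : Rabs (Fsum x j) <= 2 * 4 ^ j.
Proof. apply (dominated_by_pow_8x _ j), Fterm_dominated. Qed.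

Lemma Gsum_bound j : Rabs (Gsum x j) <= 2 * 4 ^ j.
Proof. apply (dominated_by_pow_8x _ j). intros k. apply Gterm_bound. lra. Qed.

Lemma Fsum_rec j : Fsum x (S j) = Fsum x j + x * Fsum x (S (S j)).
Proof.
  unfold Fsum.
  rewrite (Series_incr_1 (Fterm x (S j))), (Series_incr_1 (Fterm x j)) by apply ex_series_Fterm.
  rewrite (Series_ext _ _ (Fterm_pascal x j)).
  rewrite Series_plus by (apply (proj1 (ex_series_incr_1 _))
    || apply (ex_series_scal_l (V := R_NormedModule)); apply ex_series_Fterm).
  rewrite Series_scal_l, !Fterm_0. ring.
Qed.

Lemma Gsum_rec j : Gsum x (S j) = Gsum x j + Fsum x j + x * Gsum x (S (S j)).
Proof.
  unfold Gsum, Fsum.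
  rewrite (Series_incr_1 (Gterm x (S j))), (Series_incr_1 (Gterm x j)) by apply ex_series_Gterm.
  rewrite (Series_incr_1 (Fterm x j)) by apply ex_series_Fterm.
  rewrite (Series_ext _ (fun k => (Gterm x j (S k) + Fterm x j (S k)) + x * Gterm x (S (S j)) k)).
  2:{ intros k. unfold Gterm. rewrite Fterm_pascal, !plus_INR, !S_INR. ring. }
  rewrite Series_plus by (apply (ex_series_scal_l (V := R_NormedModule)), ex_series_Gterm
    || (apply (ex_series_plus (V := R_NormedModule)); apply (proj1 (ex_series_incr_1 _));
        apply ex_series_Gterm || apply ex_series_Fterm)).
  rewrite Series_plus
    by (apply (proj1 (ex_series_incr_1 _)); apply ex_series_Gterm || apply ex_series_Fterm).
  rewrite Series_scal_l, !Gterm_0, !Fterm_0, S_INR. ring.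
Qed.

Lemma Fsum_0 : Fsum x 0 = 1 + 2 * x * Fsum x 1.
Proof.
  unfold Fsum. rewrite (Series_incr_1 (Fterm x 0)) by apply ex_series_Fterm.
  rewrite (Series_ext _ _ (Fterm_0_pascal x)), Series_scal_l, Fterm_0. ring.
Qed.

Lemma Gsum_0 : Gsum x 0 = 2 * x * Gsum x 1.
Proof.
  unfold Gsum. rewrite (Series_incr_1 (Gterm x 0)) by apply ex_series_Gterm.
  rewrite (Series_ext _ (fun k => 2 * x * Gterm x 1 k)), Series_scal_l, Gterm_0; [simpl; ring|].
  intros k. unfold Gterm. rewrite Fterm_0_pascal.
  replace (1 + k)%nat with (0 + S k)%nat by lia. ring.
Qed.

End BinomialSeries.

Lemma linear_geom_le_pow4 a C j : 0 <= a -> 0 <= C <= 2 -> Rabs (a * INR j * C ^ j) <= a * 4 ^ j.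
Proof.
  intros Ha HC. pose proof (pos_INR j). pose proof (INR_le_pow2 j).
  pose proof (pow_le C j (proj1 HC)).
  assert (C ^ j <= 2 ^ j) by (apply pow_incr; lra).
  rewrite Rabs_pos_eq by (apply Rmult_le_pos; [apply Rmult_le_pos|]; lra).
  replace 4 with (2 * 2) by ring. rewrite Rpow_mult_distr, Rmult_assoc.
  apply Rmult_le_compat_l; [lra|]. apply Rmult_le_compat; assumption.
Qed.

Section SmallRoot.
Variables x C : R.
Hypothesis Hx : 0 <= x <= 1 / 16.
Hypothesis HC : 0 < C.
Hypothesis Hroot : x * C * C - C + 1 = 0.
Hypothesis Hsmall : 4 * x * C < 1.

Lemma Fsum_closed j : Fsum x j = C ^ j / (1 - 2 * x * C).
Proof.
  assert (Hgeom := recurrence_small_root (Fsum x) x C 2 ltac:(lra) HC Hroot Hsmall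
                     (Fsum_rec x Hx) (Fsum_bound x Hx)).
  assert (H0 : Fsum x 0 * (1 - 2 * x * C) = 1).
  { pose proof (Fsum_0 x Hx) as H0. rewrite (Hgeom 1%nat) in H0. simpl in H0. lra. }
  rewrite Hgeom. replace (Fsum x 0) with (/ (1 - 2 * x * C)) by (field_simplify_eq; nra).
  field. nra.
Qed.

Lemma Gsum_closed j :
  Gsum x j = (INR j + 2 * x * C / (1 - 2 * x * C)) * C ^ j / ((1 - 2 * x * C) * (2 - C)).
Proof.
  assert (HC2 : C < 2) by nra.
  set (w := 1 - 2 * x * C). assert (Hw : 1 / 2 < w) by (unfold w; nra).
  set (a := / (w * (2 - C))).
  assert (Ha : 0 < a) by (apply Rinv_0_lt_compat; nra).
  set (Y := fun j => Gsum x j - a * INR j * C ^ j).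
  assert (HY : forall j, Y (S j) = Y j + x * Y (S (S j))).
  { intros i. unfold Y. rewrite Gsum_rec, Fsum_closed, !S_INR by assumption. fold w.
    replace (C ^ i / w) with (a * (2 - C) * C ^ i) by (unfold a; field; lra).
    apply Rminus_diag_uniq. cbn [pow].
    transitivity (a * (INR i + 2) * C ^ i * (x * C * C - C + 1)); [ring | rewrite Hroot; ring]. }
  assert (HYbound : forall j, Rabs (Y j) <= (2 + a) * 4 ^ j).
  { intros i. unfold Y, Rminus. eapply Rle_trans; [apply Rabs_triang|].
    rewrite Rabs_Ropp. pose proof (Gsum_bound x Hx i).
    pose proof (linear_geom_le_pow4 a C i ltac:(lra) ltac:(lra)). lra. }
  assert (Hgeom := recurrence_small_root Y x C (2 + a) ltac:(lra) HC Hroot Hsmall HY HYbound).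
  assert (HY0 : Y 0%nat = Gsum x 0) by (unfold Y; simpl; ring).
  assert (HG0 : Gsum x 0 * w = 2 * x * C * a).
  { pose proof (Gsum_0 x Hx) as H0.
    replace (Gsum x 1) with (a * INR 1 * C ^ 1 + Y 1%nat) in H0 by (unfold Y; ring).
    rewrite Hgeom, HY0 in H0. unfold w. simpl in H0. nra. }
  replace (Gsum x j) with (a * INR j * C ^ j + Y j) by (unfold Y; ring).
  rewrite Hgeom, HY0. replace (Gsum x 0) with (2 * x * C * a / w) by (field_simplify_eq; nra).
  unfold a. field. split; lra.
Qed.

End SmallRoot.

Lemma is_series_exp y : is_series (fun j => y ^ j / INR (fact j)) (exp y).
Proof.
  apply (is_series_ext (fun j => / INR (fact j) * y ^ j)); [intros; simpl; unfold Rdiv; ring|].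
  rewrite is_series_Reals. exact (proj2_sig (exist_exp y)).
Qed.

Lemma is_series_exp_weighted y : is_series (fun j => INR j * (y ^ j / INR (fact j))) (y * exp y).
Proof.
  apply is_series_decr_1.
  apply (is_series_ext (fun k => y ^ k / INR (fact k) * y)).
  - intros k. rewrite fact_simpl, mult_INR. cbn [pow].
    change (y ^ k / INR (fact k) * y = INR (S k) * (y * y ^ k / (INR (S k) * INR (fact k)))).
    field. split; [apply INR_fact_neq_0 | apply not_0_INR; lia].
  - match goal with |- is_series _ ?l => replace l with (exp y * y) end.
    + apply is_series_scal_r, is_series_exp.
    + simpl. change (exp y * y = y * exp y + - (0 * (1 / 1))). field.
Qed.

Definition g_inner (c : R) (t : nat) : R :=
  sum_f_R0 (fun k => Binomial.C (t + 1) k * INR (t + 1 - k) / INR (fact (t + 1 - 2 * k)) *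
                     powerRZ c (Z.of_nat t - 2 * Z.of_nat k)) ((t + 1) / 2).

Section Expansion.
Variables z c C : R.
Hypothesis Hz : 0 < z.
Hypothesis Hc : 0 < c.
Hypothesis Hcz : c * z <= 1 / 8.
Hypothesis Hzz : z * z <= 1 / 16.
Hypothesis HC : 0 < C.
Hypothesis Hroot : z * z * C * C - C + 1 = 0.
Hypothesis Hsmall : 4 * (z * z) * C < 1.

Let beta (j k : nat) : R := (- (c * z)) ^ j / INR (fact j) * Gterm (z * z) j k.

Lemma is_series_beta_row j :
  is_series (even_spread (beta j)) ((- (c * z)) ^ j / INR (fact j) * Gsum (z * z) j).
Proof.
  apply is_series_even_spread. unfold beta.
  apply (is_series_ext (fun k => Gterm (z * z) j k * ((- (c * z)) ^ j / INR (fact j))));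
    [intros; simpl; ring|].
  rewrite (Rmult_comm _ (Gsum (z * z) j)). apply is_series_scal_r, Series_correct, ex_series_Gterm.
  pose proof (Rmult_le_pos z z); lra.
Qed.

Lemma beta_spread_bound j i : Rabs (even_spread (beta j) i) <= 1 * (9 / 16) ^ j * (3 / 4) ^ i.
Proof.
  pose proof (pow_le (9 / 16) j ltac:(lra)). pose proof (pow_le (3 / 4) i ltac:(lra)).
  unfold even_spread. destruct (Nat.even i) eqn:Heven; [|rewrite Rabs_R0; nra].
  assert (Hi : i = (2 * Nat.div2 i)%nat).
  { pose proof (Nat.div2_odd i) as Hodd. rewrite <- Nat.negb_even, Heven in Hodd.
    simpl in Hodd. lia. }
  set (k := Nat.div2 i) in *. rewrite Hi, pow_mult. replace ((3 / 4) ^ 2) with (9 / 16) by field.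
  unfold beta. rewrite Rabs_mult. unfold Rdiv. rewrite Rabs_mult, <- RPow_abs, Rabs_Ropp.
  rewrite (Rabs_pos_eq (c * z)), Rabs_pos_eq
    by (try apply Rlt_le, Rinv_0_lt_compat, INR_fact_lt_0; nra).
  destruct (Gterm_bound (z * z) j k ltac:(nra)) as [HG0 HG].
  rewrite Rabs_pos_eq by exact HG0.
  assert (Hfact : / INR (fact j) <= 1).
  { rewrite <- Rinv_1. apply Rinv_le_contravar; [lra|]. apply (le_INR 1), lt_O_fact. }
  assert (Hfact0 : 0 <= / INR (fact j)) by (apply Rlt_le, Rinv_0_lt_compat, INR_fact_lt_0).
  assert (Hcz4 : (4 * (c * z)) ^ j <= (9 / 16) ^ j) by (apply pow_incr; nra).
  assert (Hx8 : (8 * (z * z)) ^ k <= (9 / 16) ^ k) by (apply pow_incr; nra).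
  rewrite Rpow_mult_distr in Hcz4.
  pose proof (pow_le (c * z) j ltac:(nra)). pose proof (pow_le 4 j ltac:(lra)).
  pose proof (pow_le (8 * (z * z)) k ltac:(nra)).
  apply Rle_trans with ((c * z) ^ j * (4 ^ j * (8 * (z * z)) ^ k)).
  - rewrite Rmult_assoc. apply Rmult_le_compat_l; [nra|].
    rewrite <- (Rmult_1_l (4 ^ j * _)). apply Rmult_le_compat; nra.
  - replace ((c * z) ^ j * (4 ^ j * (8 * (z * z)) ^ k))
      with (4 ^ j * (c * z) ^ j * (8 * (z * z)) ^ k) by ring.
    rewrite Rmult_1_l. apply Rmult_le_compat; nra.
Qed.

Lemma Series_beta_rows :
  Series (fun j => Series (even_spread (beta j))) =
  exp (- (c * z * C)) * (2 * (z * z) * C / (1 - 2 * (z * z) * C) - c * z * C)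
  / ((1 - 2 * (z * z) * C) * (2 - C)).
Proof.
  assert (Hzz0 : 0 <= z * z <= 1 / 16) by nra.
  assert (HC2 : C < 2) by nra.
  assert (Hw : 0 < 1 - 2 * (z * z) * C) by nra.
  set (d := (1 - 2 * (z * z) * C) * (2 - C)). assert (Hd : 0 < d) by (unfold d; nra).
  set (b := 2 * (z * z) * C / (1 - 2 * (z * z) * C)).
  set (y := - (c * z * C)).
  apply is_series_unique.
  apply (is_series_ext
    (fun j => (INR j * (y ^ j / INR (fact j))) * / d + (y ^ j / INR (fact j)) * (b / d))).
  { intros j. rewrite (is_series_unique _ _ (is_series_beta_row j)).
    rewrite (Gsum_closed _ _ Hzz0 HC Hroot Hsmall j). fold b d.
    unfold y. replace (- (c * z * C)) with (- (c * z) * C) by ring. rewrite Rpow_mult_distr.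
    simpl. field. split; [lra | apply INR_fact_neq_0]. }
  match goal with |- is_series _ ?l =>
    replace l with (y * exp y * / d + exp y * (b / d)) by (unfold y; field; lra) end.
  apply (is_series_plus (V := R_NormedModule)); apply is_series_scal_r;
    [apply is_series_exp_weighted | apply is_series_exp].
Qed.

Lemma powerRZ_pred_pow (t k : nat) : (2 * k <= S t)%nat ->
  powerRZ c (Z.of_nat t - 2 * Z.of_nat k) = c ^ (S t - 2 * k) / c.
Proof.
  intros Hk. replace (Z.of_nat t - 2 * Z.of_nat k)%Z with (Z.of_nat (S t - 2 * k) + (-1))%Z by lia.
  rewrite powerRZ_add, <- pow_powerRZ by lra. simpl. field. lra.
Qed.

Lemma beta_antidiag_term t k : (2 * k <= S t)%nat ->
  beta (S t - 2 * k) k =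
  - (c * z) * ((- z) ^ t * (Binomial.C (t + 1) k * INR (t + 1 - k) / INR (fact (t + 1 - 2 * k)) *
                            powerRZ c (Z.of_nat t - 2 * Z.of_nat k))).
Proof.
  intros Hk. rewrite powerRZ_pred_pow by exact Hk. unfold beta, Gterm, Fterm.
  set (j := (S t - 2 * k)%nat).
  replace (j + k)%nat with (t + 1 - k)%nat by (unfold j; lia).
  replace (j + 2 * k)%nat with (t + 1)%nat by (unfold j; lia).
  replace (t + 1 - 2 * k)%nat with j by (unfold j; lia).
  assert (Hsign : (- z) ^ t * (- (c * z)) = c * ((- z) ^ j * (z * z) ^ k)).
  { replace ((z * z) ^ k) with ((- z) ^ (2 * k)) by (rewrite pow_mult; f_equal; ring).
    rewrite <- pow_add. replace (j + 2 * k)%nat with (S t) by (unfold j; lia). simpl. ring. }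
  rewrite <- (Rmult_assoc (- (c * z)) ((- z) ^ t)), (Rmult_comm (- (c * z)) ((- z) ^ t)), Hsign.
  replace ((- (c * z)) ^ j) with (c ^ j * (- z) ^ j) by (rewrite <- Rpow_mult_distr; f_equal; ring).
  field. split; [lra | apply INR_fact_neq_0].
Qed.

Lemma beta_antidiag t :
  sum_f_R0 (fun j => even_spread (beta j) (S t - j)) (S t) = - (c * z) * ((- z) ^ t * g_inner c t).
Proof.
  rewrite <- sum_antidiag_even_spread. unfold g_inner.
  replace ((t + 1) / 2)%nat with (Nat.div2 (S t)) by (rewrite Nat.div2_div; f_equal; lia).
  rewrite (scal_sum _ _ ((- z) ^ t)), scal_sum.
  apply sum_eq. intros k Hk. rewrite beta_antidiag_term; [ring|].
  pose proof (Nat.div2_odd (S t)). lia.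
Qed.

Lemma is_series_g_inner :
  is_series (fun t => (- z) ^ t * g_inner c t)
    (exp (- (c * z * C)) * (2 * (z * z) * C / (1 - 2 * (z * z) * C) - c * z * C)
     / ((1 - 2 * (z * z) * C) * (2 - C)) / - (c * z)).
Proof.
  pose proof (is_series_antidiag (fun j => even_spread (beta j)) (9 / 16) (3 / 4) 1
                ltac:(lra) ltac:(lra) ltac:(lra) beta_spread_bound) as Hdiag.
  cbv beta in Hdiag. rewrite Series_beta_rows in Hdiag.
  set (d := fun m => sum_f_R0 (fun j => even_spread (beta j) (m - j)) m) in Hdiag.
  assert (Hd0 : d 0%nat = 0) by (unfold d, beta, Gterm, even_spread; simpl; ring).
  apply (is_series_ext (fun t => d (S t) * / - (c * z))).
  { intros t. unfold d. rewrite beta_antidiag. simpl. field. nra. }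
  apply is_series_scal_r, is_series_incr_1. rewrite Hd0.
  change (plus ?l 0) with (l + 0). rewrite Rplus_0_r. exact Hdiag.
Qed.

End Expansion.

(* With [z = 1/(2s)], the smaller root of [z^2 C^2 - C + 1] is [C = 2s(s - v)]. *)
Lemma is_series_g_inner_sqrt (s v c : R) :
  0 < s -> 0 < v -> s * s = v * v + 1 -> 24 <= s * s -> 0 < c <= 2 / 3 ->
  is_series (fun t => (- / (2 * s)) ^ t * g_inner c t)
    (exp (c * (v - s)) * (s * s) * (c * v - 1) / (c * v ^ 3)).
Proof.
  intros Hs Hv Hsv Hs24 Hc.
  assert (Hvs : v < s) by nra. assert (H4s : 4 < s) by nra. assert (Hs2v : s < 2 * v) by nra.
  set (z := / (2 * s)). set (C := 2 * s * (s - v)).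
  assert (Hz : 0 < z) by (apply Rinv_0_lt_compat; lra).
  assert (Hzs : z * s = 1 / 2) by (unfold z; field; lra).
  assert (Hz8 : z < 1 / 8) by nra.
  assert (HzC : z * C = s - v) by (unfold z, C; field; lra).
  assert (Hroot : z * z * C * C - C + 1 = 0)
    by (replace (z * z * C * C) with ((z * C) * (z * C)) by ring; rewrite HzC; unfold C; nra).
  assert (Hsmall : 4 * (z * z) * C < 1).
  { replace (4 * (z * z) * C) with (2 * (s - v) * (2 * z)) by (rewrite <- HzC; ring).
    replace (2 * z) with (/ s) by (unfold z; field; lra).
    apply (Rmult_lt_reg_r s); [lra|]. rewrite Rmult_assoc, Rinv_l; lra. }
  assert (Hw : 1 - 2 * (z * z) * C = v / s) by (unfold z, C; field; lra).
  assert (HC2 : 2 - C = 2 * v * (s - v)) by (unfold C; nra).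
  assert (HczC : c * z * C = c * (s - v)) by (unfold z, C; field; lra).
  pose proof (is_series_g_inner z c C Hz ltac:(lra) ltac:(nra) ltac:(nra) ltac:(unfold C; nra)
                Hroot Hsmall) as H.
  rewrite Hw, HC2, HczC in H.
  replace (exp (c * (v - s)) * (s * s) * (c * v - 1) / (c * v ^ 3))
    with (exp (- (c * (s - v))) * (2 * (z * z) * C / (v / s) - c * (s - v))
          / (v / s * (2 * v * (s - v))) / - (c * z)).
  - exact H.
  - replace (- (c * (s - v))) with (c * (v - s)) by ring. unfold z, C. field. repeat split; lra.
Qed.

Lemma g_term_eq n t : (1 <= n)%nat ->
  g_term n t = (- / (2 * sqrt (24 * INR n))) ^ t * g_inner (PI / 6) t.
Proof.
  intros Hn. apply (le_INR 1) in Hn. simpl in Hn.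
  assert (Hsqrt : - (4 * sqrt 6) * sqrt (INR n) = - (2 * sqrt (24 * INR n))).
  { replace (24 * INR n) with ((2 * 2) * (6 * INR n)) by ring.
    rewrite sqrt_mult, (sqrt_mult 6), sqrt_square by lra. ring. }
  pose proof (sqrt_lt_R0 (INR n) ltac:(lra)). pose proof (sqrt_lt_R0 6 ltac:(lra)).
  unfold g_term, g. fold (g_inner (PI / 6) t).
  rewrite <- Rinv_opp, <- Hsqrt, pow_inv, Rpow_mult_distr. field.
  split; apply pow_nonzero; lra.
Qed.

Lemma sqrt_12 : sqrt 12 = 6 / sqrt 3.
Proof.
  assert (Hsqrt3 : 0 < sqrt 3) by (apply sqrt_lt_R0; lra).
  replace 12 with ((2 * 2) * 3) by ring. rewrite sqrt_mult, sqrt_square by lra.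
  replace 6 with (2 * (sqrt 3 * sqrt 3)) by (rewrite sqrt_sqrt; lra). field. lra.
Qed.

Lemma sqrt_2x_3 x : 0 <= x -> sqrt (2 * x / 3) = sqrt (24 * x) / 6.
Proof.
  intros Hx. replace (24 * x) with ((6 * 6) * (2 * x / 3)) by field.
  rewrite sqrt_mult, sqrt_square by lra. field.
Qed.

Theorem mainTheorem5 (n : nat) (hn : (1 <= n)%nat) :
  ex_series (g_term n) /\
  sqrt 12 * exp (mu n) / (24 * INR n - 1) * (1 - / mu n)
  = exp (PI * sqrt (2 * INR n / 3)) / (4 * INR n * sqrt 3) * Series (g_term n).
Proof.
  assert (Hn : 1 <= INR n) by (apply (le_INR 1); lia).
  set (s := sqrt (24 * INR n)). set (v := sqrt (24 * INR n - 1)). set (c := PI / 6).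
  assert (Hss : s * s = 24 * INR n) by (apply sqrt_sqrt; lra).
  assert (Hvv : v * v = 24 * INR n - 1) by (apply sqrt_sqrt; lra).
  assert (Hs : 0 < s) by (apply sqrt_lt_R0; lra).
  assert (Hv : 0 < v) by (apply sqrt_lt_R0; lra).
  assert (Hc : 0 < c <= 2 / 3) by (pose proof PI_RGT_0; pose proof PI_4; unfold c; lra).
  assert (HS : is_series (g_term n) (exp (c * (v - s)) * (s * s) * (c * v - 1) / (c * v ^ 3))).
  { apply (is_series_ext _ _ _ (fun t => eq_sym (g_term_eq n t hn))).
    apply is_series_g_inner_sqrt; lra. }
  split; [eexists; exact HS|]. rewrite (is_series_unique _ _ HS).
  assert (Hsqrt3 : 0 < sqrt 3) by (apply sqrt_lt_R0; lra).
  change (mu n) with (c * v). rewrite sqrt_2x_3, sqrt_12, <- Hvv by lra. fold s.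
  replace (exp (c * v)) with (exp (c * s) * exp (c * (v - s)))
    by (rewrite <- exp_plus; f_equal; ring).
  replace (4 * INR n) with (s * s / 6) by lra.
  replace (PI * (s / 6)) with (c * s) by (unfold c; field).
  field. repeat split; lra.
Qed.
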